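(* Let $G$ be a right $\ell$-group with a strong order unit $s$, and let $g \in G^-$. Then $g$ has a unique right-normal factorization. It is given by $g = g_k g_{k-1}\cdots g_1$, where $k = \min\{ i \geq 0 : g \geq s^{-i}\}$ and \[ g_i = (g \vee s^{-i})(g \vee s^{-(i-1)})^{-1} \qquad (1 \leq i \leq k). \]
   Context: A right $\ell$-group is a group $G$ (identity $e$) with a partial order $\leq$ that is right-invariant ($x \leq y \Rightarrow xz \leq yz$ for all $x,y,z$) and under which $G$ is a lattice with meet $\wedge$ and join $\vee$. $G^- := \{g \in G : g \leq e\}$ is the negative cone, and $[a,b] := \{x : a \leq x \leq b\}$. An element $s \in G$ is normal if $x \mapsto sx$ is a lattice automorphism of $G$. It is a strong order unit if $s > e$, $s$ is normal, and for every $g \in G$ there is $k \in \mathbb{Z}$ with $g \leq s^k$. For $g \in G^-$, a right-normal factorization of $g$ is a finite sequence $g_1,\dots,g_k \in [s^{-1},e]$ ($k \geq 0$) satisfying three conditions: (1) $g = g_k g_{k-1}\cdots g_1$; (2) $g_i \neq e$ for all $i$; (3) for each $1 \leq i < k$ there do not exist $h,h' \in G^-$ with $h \neq e$, $h'h = g_{i+1}$ and $hg_i \in [s^{-1},e]$. *)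

From Stdlib Require Import ZArith List Arith.
Import ListNotations.

Record RLGroup := {
  car :> Type;
  mul : car -> car -> car;
  inv : car -> car;
  e : car;
  le : car -> car -> Prop;
  meet : car -> car -> car;
  join : car -> car -> car;
  mulA : forall x y z, mul x (mul y z) = mul (mul x y) z;
  mul1g : forall x, mul e x = x;
  mulg1 : forall x, mul x e = x;
  mulVg : forall x, mul (inv x) x = e;
  mulgV : forall x, mul x (inv x) = e;
  le_refl : forall x, le x x;
  le_antisym : forall x y, le x y -> le y x -> x = y;
  le_trans : forall x y z, le x y -> le y z -> le x z;
  le_rinv : forall x y z, le x y -> le (mul x z) (mul y z);
  meet_lb1 : forall x y, le (meet x y) x;
  meet_lb2 : forall x y, le (meet x y) y;
  meet_glb : forall x y z, le z x -> le z y -> le z (meet x y);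
  join_ub1 : forall x y, le x (join x y);
  join_ub2 : forall x y, le y (join x y);
  join_lub : forall x y z, le x z -> le y z -> le (join x y) z
}.

Arguments mul {_}. Arguments inv {_}. Arguments e {_}. Arguments le {_}.
Arguments meet {_}. Arguments join {_}.

Section Defs.
Variable G : RLGroup.

Fixpoint npow (x : G) (n : nat) : G :=
  match n with O => e | S m => mul (npow x m) x end.

Definition zpow (x : G) (k : Z) : G :=
  match k with
  | Z0 => e
  | Zpos p => npow x (Pos.to_nat p)
  | Zneg p => inv (npow x (Pos.to_nat p))
  end.

Definition npowN (x : G) (i : nat) : G := inv (npow x i).

Definition lt (x y : G) : Prop := le x y /\ x <> y.

Definition lattice_automorphism (f : G -> G) : Prop :=
  (forall y, exists! x, f x = y) /\
  (forall x y, f (meet x y) = meet (f x) (f y)) /\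
  (forall x y, f (join x y) = join (f x) (f y)).

Definition normal (s : G) : Prop := lattice_automorphism (fun x => mul s x).

Definition strong_order_unit (s : G) : Prop :=
  lt e s /\ normal s /\ forall g : G, exists k : Z, le g (zpow s k).

Definition negcone (g : G) : Prop := le g e.

Definition in_interval (a b x : G) : Prop := le a x /\ le x b.

(* product g_k ... g_1 of the list [g_1; ...; g_k] *)
Definition prodR (l : list G) : G := fold_left (fun acc x => mul x acc) l e.

Definition right_normal_factorization (s g : G) (l : list G) : Prop :=
  (forall x, In x l -> in_interval (inv s) e x) /\
  g = prodR l /\
  (forall x, In x l -> x <> e) /\
  (forall i, S i < length l ->
     ~ exists h h' : G, negcone h /\ negcone h' /\ h <> e /\
         mul h' h = nth (S i) l e /\
         in_interval (inv s) e (mul h (nth i l e))).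

End Defs.

Arguments npow {_}. Arguments zpow {_}. Arguments npowN {_}.
Arguments strong_order_unit {_}. Arguments negcone {_}.
Arguments right_normal_factorization {_}.

(** The normality condition between consecutive factors [x], [y] (both
    between [s^-1] and [e]) is equivalent to [y x \/ s^-1 = x]; iterating it from the left
    shows that the first factor of any right-normal factorization of [g] is
    forced to be [g \/ s^-1].  Peeling it off leaves [r = g (g \/ s^-1)^-1],
    and since left multiplication by [s^-j] preserves joins (normality of [s]),
    [r \/ s^-j = (g \/ s^-(j+1)) (g \/ s^-1)^-1].  Hence the least exponent
    drops by one and the factors of [r] are the shifted factors of [g]:
    induction on [k] gives existence, induction on the length of a
    factorization gives uniqueness. *)

From Stdlib Require Import ZArith List Lia Classical.
Import ListNotations.

Section RLGroupTheory.

Variable G : RLGroup.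
Implicit Types a b f g x y z : G.

Lemma mulgK x y : mul (mul x y) (inv y) = x.
Proof. now rewrite <- mulA, mulgV, mulg1. Qed.

Lemma mulgKV x y : mul (mul x (inv y)) y = x.
Proof. now rewrite <- mulA, mulVg, mulg1. Qed.

Lemma mulKg x y : mul (inv x) (mul x y) = y.
Proof. now rewrite mulA, mulVg, mul1g. Qed.

Lemma mulKVg x y : mul x (mul (inv x) y) = y.
Proof. now rewrite mulA, mulgV, mul1g. Qed.

Lemma mul_eq1_inv x y : mul x y = e -> y = inv x.
Proof. intro Hxy. now rewrite <- (mulKg x y), Hxy, mulg1. Qed.

Lemma invMg x y : inv (mul x y) = mul (inv y) (inv x).
Proof.
  symmetry. apply mul_eq1_inv.
  now rewrite <- mulA, mulKVg, mulgV.
Qed.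

Lemma invg1 : inv (@e G) = e.
Proof. symmetry. apply mul_eq1_inv, mulg1. Qed.

Lemma invgK x : inv (inv x) = x.
Proof. symmetry. apply mul_eq1_inv, mulVg. Qed.

Lemma le_mul2r x y z : le (mul x z) (mul y z) <-> le x y.
Proof.
  split; intro Hle; [|now apply le_rinv].
  apply (le_rinv G _ _ (inv z)) in Hle. now rewrite !mulgK in Hle.
Qed.

Lemma mull_negcone_le a x : negcone a -> le (mul a x) x.
Proof. intro Ha. rewrite <- (mul1g G x) at 2. now apply le_rinv. Qed.

Lemma le_negcone_mulV x y : le x y -> negcone (mul x (inv y)).
Proof. intro Hxy. unfold negcone. rewrite <- (mulgV G y). now apply le_rinv. Qed.

Lemma joinMr x y z : mul (join x y) z = join (mul x z) (mul y z).
Proof.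
  apply le_antisym.
  - apply (le_mul2r _ _ (inv z)). rewrite mulgK.
    apply join_lub; apply (le_mul2r _ _ z); rewrite mulgKV;
      [apply join_ub1 | apply join_ub2].
  - apply join_lub; apply le_rinv; [apply join_ub1 | apply join_ub2].
Qed.

Lemma join_l x y : le y x -> join x y = x.
Proof.
  intro Hyx. apply le_antisym; [apply join_lub; [apply le_refl | exact Hyx] | apply join_ub1].
Qed.

Lemma join_r x y : le x y -> join x y = y.
Proof.
  intro Hxy. apply le_antisym; [apply join_lub; [exact Hxy | apply le_refl] | apply join_ub2].
Qed.

Lemma joinA x y z : join x (join y z) = join (join x y) z.
Proof.
  apply le_antisym; repeat apply join_lub;
    eauto using le_trans, join_ub1, join_ub2.
Qed.

Definition ldistr_join a : Prop :=
  forall x y, mul a (join x y) = join (mul a x) (mul a y).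

Lemma ldistr_join_le a x y : ldistr_join a -> le x y -> le (mul a x) (mul a y).
Proof. intros Ha Hxy. rewrite <- (join_r _ _ Hxy), Ha. apply join_ub1. Qed.

Lemma ldistr_join1 : ldistr_join e.
Proof. intros x y. now rewrite !mul1g. Qed.

Lemma ldistr_joinV a : ldistr_join a -> ldistr_join (inv a).
Proof.
  intros Ha x y.
  assert (Hxy : join x y = mul a (join (mul (inv a) x) (mul (inv a) y)))
    by now rewrite Ha, !mulKVg.
  now rewrite Hxy, mulKg.
Qed.

Lemma ldistr_joinM a b : ldistr_join a -> ldistr_join b -> ldistr_join (mul a b).
Proof. intros Ha Hb x y. now rewrite <- !mulA, Hb, Ha. Qed.

Lemma prodR_foldE l a : fold_left (fun acc x => mul x acc) l a = mul (prodR G l) a.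
Proof.
  revert a; induction l as [|x l IH]; intro a; unfold prodR; simpl.
  - now rewrite mul1g.
  - now rewrite !IH, mulg1, mulA.
Qed.

Lemma prodR_cons x l : prodR G (x :: l) = mul (prodR G l) x.
Proof. unfold prodR at 1; simpl. now rewrite prodR_foldE, mulg1. Qed.

Section StrongOrderUnit.

Variable s : G.
Hypothesis Hs : strong_order_unit s.

Lemma npow_mulC n : mul s (npow s n) = mul (npow s n) s.
Proof.
  induction n as [|n IH]; simpl; [now rewrite mul1g, mulg1|].
  now rewrite mulA, IH.
Qed.

Lemma npowN0 : npowN s 0 = e.
Proof. exact invg1. Qed.

Lemma npowN1 : npowN s 1 = inv s.
Proof. unfold npowN; simpl. now rewrite mul1g. Qed.

Lemma npowNS n : npowN s (S n) = mul (inv s) (npowN s n).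
Proof. exact (invMg _ _). Qed.

Lemma npowNSr n : npowN s (S n) = mul (npowN s n) (inv s).
Proof. unfold npowN; simpl. now rewrite <- npow_mulC, invMg. Qed.

Lemma invs_negcone : negcone (inv s).
Proof.
  destruct Hs as [[Hs1 _] _]. unfold negcone.
  apply (le_rinv G _ _ (inv s)) in Hs1. now rewrite mul1g, mulgV in Hs1.
Qed.

Lemma ldistr_join_s : ldistr_join s.
Proof. destruct Hs as [_ [[_ [_ Hjoin]] _]]. exact Hjoin. Qed.

Lemma ldistr_join_npowN n : ldistr_join (npowN s n).
Proof.
  induction n as [|n IH]; [rewrite npowN0; exact ldistr_join1|].
  rewrite npowNS. apply ldistr_joinM; [apply ldistr_joinV, ldistr_join_s | exact IH].
Qed.

Lemma npowN_anti i j : i <= j -> le (npowN s j) (npowN s i).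
Proof.
  induction 1 as [|j _ IH]; [apply le_refl|].
  rewrite npowNS. eapply le_trans; [apply mull_negcone_le, invs_negcone | exact IH].
Qed.

Lemma npowN_negcone n : negcone (npowN s n).
Proof. unfold negcone. rewrite <- npowN0. apply npowN_anti; lia. Qed.

Lemma exists_npowN_le g : exists n, le (npowN s n) g.
Proof.
  destruct Hs as [_ [_ Hbound]]. destruct (Hbound (inv g)) as [z Hz].
  apply (le_rinv G _ _ g) in Hz. rewrite mulVg in Hz.
  destruct z as [|p|p]; simpl in Hz.
  - exists 0. rewrite npowN0. now rewrite mul1g in Hz.
  - exists (Pos.to_nat p).
    apply (ldistr_join_le (npowN s (Pos.to_nat p))) in Hz; [|apply ldistr_join_npowN].
    unfold npowN at 2 in Hz. now rewrite mulKg, mulg1 in Hz.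
  - exists 0. rewrite npowN0.
    eapply le_trans; [exact Hz | apply mull_negcone_le, npowN_negcone].
Qed.

Definition least_exponent g k : Prop :=
  le (npowN s k) g /\ forall i, le (npowN s i) g -> k <= i.

Lemma exists_least_exponent g : exists k, least_exponent g k.
Proof.
  destruct (dec_inh_nat_subset_has_unique_least_element
              (fun n => le (npowN s n) g) (fun n => classic _) (exists_npowN_le g))
    as (k & Hk & _).
  now exists k.
Qed.

Definition first_factor g : G := join g (inv s).

Definition rest g : G := mul g (inv (first_factor g)).

Lemma first_factor_in_interval g : negcone g -> in_interval G (inv s) e (first_factor g).
Proof. intro Hg. split; [apply join_ub2 | apply join_lub; [exact Hg | exact invs_negcone]]. Qed.

Lemma rest_negcone g : negcone (rest g).
Proof. apply le_negcone_mulV, join_ub1. Qed.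

Lemma join_rest_npowN_mul g j :
  mul (join (rest g) (npowN s j)) (first_factor g) = join g (npowN s (S j)).
Proof.
  unfold rest. rewrite joinMr, mulgKV. unfold first_factor.
  rewrite ldistr_join_npowN, <- npowNSr, joinA.
  now rewrite (join_l g) by apply mull_negcone_le, npowN_negcone.
Qed.

Lemma join_rest_npowN g j :
  join (rest g) (npowN s j) = mul (join g (npowN s (S j))) (inv (first_factor g)).
Proof. now rewrite <- join_rest_npowN_mul, mulgK. Qed.

Lemma npowN_le_rest g i : le (npowN s i) (rest g) <-> le (npowN s (S i)) g.
Proof.
  rewrite <- (le_mul2r _ _ (first_factor g)). unfold rest. rewrite mulgKV.
  unfold first_factor. rewrite ldistr_join_npowN, <- npowNSr.
  split; intro Hle.
  - eapply le_trans; [apply join_ub2 | exact Hle].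
  - apply join_lub; [apply mull_negcone_le, npowN_negcone | exact Hle].
Qed.

Lemma least_exponent_rest g k : least_exponent g (S k) -> least_exponent (rest g) k.
Proof.
  intros [Hk Hmin]. split; [now apply npowN_le_rest|].
  intros i Hi. apply npowN_le_rest, Hmin in Hi. lia.
Qed.

Definition factor g i : G :=
  mul (join g (npowN s i)) (inv (join g (npowN s (i - 1)))).

Definition factors g k : list G := map (factor g) (seq 1 k).

Lemma factor_rest g j : 1 <= j -> factor (rest g) j = factor g (S j).
Proof.
  intro Hj. unfold factor. rewrite !join_rest_npowN.
  replace (S (j - 1)) with j by lia. replace (S j - 1) with j by lia.
  now rewrite invMg, invgK, mulA, mulgKV.
Qed.

Lemma factors_S g k : negcone g -> factors g (S k) = first_factor g :: factors (rest g) k.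
Proof.
  intro Hg. unfold factors; simpl. f_equal.
  - unfold factor; simpl. now rewrite npowN0, (join_r g e Hg), invg1, mulg1, npowN1.
  - rewrite <- seq_shift, map_map. apply map_ext_in. intros j Hj.
    apply in_seq in Hj. symmetry. apply factor_rest. lia.
Qed.

Definition normal_pair x y : Prop :=
  ~ exists h h' : G, negcone h /\ negcone h' /\ h <> e /\
      mul h' h = y /\ in_interval G (inv s) e (mul h x).

Lemma normal_pairP x y : in_interval G (inv s) e x -> negcone y ->
  normal_pair x y <-> join (mul y x) (inv s) = x.
Proof.
  intros [Hsx Hxe] Hy. split.
  - intro Hnormal.
    (* the least [h] above [y] with [s^-1 <= h x] *)
    set (h := join y (mul (inv s) (inv x))).
    assert (Hhx : mul h x = join (mul y x) (inv s)) by now unfold h; rewrite joinMr, mulgKV.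
    rewrite <- Hhx. destruct (classic (h = e)) as [Hh1|Hh1]; [now rewrite Hh1, mul1g|].
    assert (Hh : negcone h) by (apply join_lub; [exact Hy | now apply le_negcone_mulV]).
    exfalso. apply Hnormal. exists h, (mul y (inv h)). repeat split.
    + exact Hh.
    + apply le_negcone_mulV, join_ub1.
    + exact Hh1.
    + apply mulgKV.
    + rewrite Hhx. apply join_ub2.
    + eapply le_trans; [apply mull_negcone_le, Hh | exact Hxe].
  - intros Hjoin (h & h' & Hh & Hh' & Hh1 & Hy' & Hhx). apply Hh1, le_antisym; [exact Hh|].
    apply (le_mul2r _ _ x). rewrite mul1g. rewrite <- Hjoin at 1.
    apply join_lub; [|apply Hhx].
    rewrite <- Hy', <- mulA. now apply mull_negcone_le.
Qed.

Fixpoint normal_seq (l : list G) : Prop :=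
  match l with
  | [] => True
  | x :: l' => in_interval G (inv s) e x /\ x <> e /\
      match l' with [] => True | y :: _ => normal_pair x y end /\ normal_seq l'
  end.

Lemma normal_seq_nth l : normal_seq l <->
  (forall x, In x l -> in_interval G (inv s) e x) /\ (forall x, In x l -> x <> e) /\
  (forall i, S i < length l -> normal_pair (nth i l e) (nth (S i) l e)).
Proof.
  induction l as [|x l IH]; simpl.
  - split; [intros _; repeat split; intros; (contradiction || lia) | trivial].
  - rewrite IH. split.
    + intros (Hx & Hx1 & Hpair & Hin & Hne & Hnth). split; [|split].
      * intros z [<-|Hz]; auto.
      * intros z [<-|Hz]; auto.
      * intros [|i] Hi.
        -- destruct l; [simpl in Hi; lia | exact Hpair].
        -- apply Hnth. simpl in Hi. lia.
    + intros (Hin & Hne & Hnth). split; [|split; [|split; [|split; [|split]]]]; auto.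
      * destruct l as [|y l]; [trivial | apply (Hnth 0); simpl; lia].
      * intros i Hi. apply (Hnth (S i)). simpl. lia.
Qed.

Lemma right_normal_factorizationE g l :
  right_normal_factorization s g l <-> g = prodR G l /\ normal_seq l.
Proof.
  rewrite normal_seq_nth. unfold right_normal_factorization.
  split.
  - intros (Hin & Hprod & Hne & Hnth). exact (conj Hprod (conj Hin (conj Hne Hnth))).
  - intros (Hprod & Hin & Hne & Hnth). exact (conj Hin (conj Hprod (conj Hne Hnth))).
Qed.

Lemma normal_seq_head f l : normal_seq (f :: l) -> f = join (prodR G (f :: l)) (inv s).
Proof.
  revert f; induction l as [|f2 l IH]; intros f Hn.
  - rewrite prodR_cons. change (prodR G []) with (@e G).
    rewrite mul1g, join_l; [reflexivity | apply Hn].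
  - destruct Hn as (Hf & _ & Hpair & Hn).
    apply normal_pairP in Hpair; [|exact Hf | apply (proj1 Hn)].
    pose proof (IH f2 Hn) as Hf2. rewrite prodR_cons.
    set (P := prodR G (f2 :: l)) in *.
    rewrite <- Hpair at 1. rewrite Hf2, joinMr, <- joinA, (join_r (mul (inv s) f)); [reflexivity|].
    rewrite <- (mulg1 G (inv s)) at 2.
    apply ldistr_join_le; [apply ldistr_joinV, ldistr_join_s | apply Hf].
Qed.

Lemma factors_normal k : forall g, negcone g -> least_exponent g k ->
  g = prodR G (factors g k) /\ normal_seq (factors g k).
Proof.
  induction k as [|k IH]; intros g Hg Hk.
  - split; [|exact I]. change (prodR G (factors g 0)) with (@e G).
    apply le_antisym; [exact Hg|]. rewrite <- npowN0. apply Hk.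
  - pose proof (least_exponent_rest _ _ Hk) as Hr.
    destruct (IH (rest g) (rest_negcone g) Hr) as [Hprod Hnorm].
    rewrite factors_S by exact Hg. split.
    + rewrite prodR_cons, <- Hprod. symmetry. apply mulgKV.
    + pose proof (first_factor_in_interval g Hg) as Hfirst.
      simpl. split; [exact Hfirst|]. split; [|split; [|exact Hnorm]].
      * intro H1. destruct Hr as [Hrk _]. unfold rest in Hrk.
        rewrite H1, invg1, mulg1 in Hrk. apply (proj2 Hk) in Hrk. lia.
      * destruct k as [|k]; [exact I|].
        rewrite factors_S in Hnorm |- * by apply rest_negcone.
        apply normal_pairP; [exact Hfirst | apply (proj1 Hnorm) |].
        pose proof (join_rest_npowN_mul g 1) as Hmul. rewrite npowN1 in Hmul.
        change (mul (first_factor (rest g)) (first_factor g) = join g (npowN s 2)) in Hmul.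
        rewrite Hmul. unfold first_factor.
        rewrite <- joinA, <- npowN1, (join_r (npowN s 2)) by (apply npowN_anti; lia).
        reflexivity.
Qed.

Lemma normal_seq_unique l : forall g k, negcone g -> least_exponent g k ->
  g = prodR G l -> normal_seq l -> l = factors g k.
Proof.
  induction l as [|f l IH]; intros g k Hg Hk Hprod Hn.
  - destruct k as [|k]; [reflexivity|]. exfalso.
    assert (H0 : le (npowN s 0) g) by now rewrite npowN0, Hprod; apply le_refl.
    apply (proj2 Hk) in H0. lia.
  - pose proof (normal_seq_head f l Hn) as Hf. rewrite <- Hprod in Hf.
    change (f = first_factor g) in Hf.
    destruct k as [|k].
    + exfalso. apply (proj1 (proj2 Hn)).
      assert (Hg1 : g = e) by (apply le_antisym; [exact Hg | rewrite <- npowN0; apply Hk]).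
      rewrite Hf. unfold first_factor. rewrite Hg1. apply join_l, invs_negcone.
    + rewrite factors_S by exact Hg. rewrite <- Hf. f_equal.
      apply IH; [apply rest_negcone | now apply least_exponent_rest | | apply Hn].
      unfold rest. rewrite <- Hf, Hprod, prodR_cons. apply mulgK.
Qed.

End StrongOrderUnit.

End RLGroupTheory.

Theorem mainTheorem1 (G : RLGroup) (s g : G) :
  strong_order_unit s -> negcone g ->
  exists k : nat,
    le (npowN s k) g /\
    (forall i : nat, le (npowN s i) g -> k <= i) /\
    let l := map (fun i => mul (join g (npowN s i)) (inv (join g (npowN s (i - 1)))))
                 (seq 1 k) in
    right_normal_factorization s g l /\
    (forall l' : list G, right_normal_factorization s g l' -> l' = l).
Proof.
  intros Hs Hg.
  destruct (exists_least_exponent G s Hs g) as [k Hleast].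
  exists k. split; [apply Hleast|]. split; [apply Hleast|].
  change (right_normal_factorization s g (factors G s g k) /\
          forall l', right_normal_factorization s g l' -> l' = factors G s g k).
  split.
  - apply right_normal_factorizationE, (factors_normal G s Hs k g Hg Hleast).
  - intros l' Hl'. apply right_normal_factorizationE in Hl' as [Hprod Hnorm].
    exact (normal_seq_unique G s Hs l' g k Hg Hleast Hprod Hnorm).
Qed.
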